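(* Let $G$ be a simple graph with $m\ge 1$ edges and $\mathcal{H}$-eigenvalues $\lambda_1\ge\lambda_2\ge\cdots\ge\lambda_m$. Let $G'$ be an induced subgraph of $G$ with $m'\ge 1$ edges and $\mathcal{H}$-eigenvalues $\lambda_1'\ge\lambda_2'\ge\cdots\ge\lambda_{m'}'$. Then for every $1\le i\le m'$, $$\lambda_i\ge\lambda_i'+\kappa_{\min}(G')\quad\text{and}\quad \lambda_i'+\kappa_{\max}(G')\ge\lambda_{m-m'+i}.$$
   Context: For an oriented edge $e$ write $e^-$ for its tail and $e^+$ for its head. For distinct edges $e,e'$: $e\leftrightarrow e'$ means $e^+=e'^-$ or $e'^+=e^-$; $e\overset{\pm}{\sim}e'$ means $e^+=e'^+$ or $e^-=e'^-$; $e\vartriangle e'$ means $e,e'$ are two edges of a common triangle of the graph. $\triangle_G(e)$ is the number of triangles of $G$ containing $e$. The Helmholtzian matrix $\mathcal{H}(G)=(h_{ee'})$ is indexed by the edges, with $h_{ee}=\triangle_G(e)+2$, and for $e\ne e'$: $h_{ee'}=-1$ if $e\leftrightarrow e'$ and not $e\vartriangle e'$; $h_{ee'}=1$ if $e\overset{\pm}{\sim}e'$ and not $e\vartriangle e'$; $h_{ee'}=0$ otherwise. The $\mathcal{H}$-eigenvalues of a graph are the eigenvalues of its Helmholtzian matrix for an arbitrary edge orientation (they do not depend on the orientation). For an induced subgraph $G'$ of $G$ and $e\in E(G')$, $\kappa_{G'}(e)=\triangle_G(e)-\triangle_{G'}(e)$, $\kappa_{\min}(G')=\min_{e\in E(G')}\kappa_{G'}(e)$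 and $\kappa_{\max}(G')=\max_{e\in E(G')}\kappa_{G'}(e)$. *)

From HB Require Import structures.
From mathcomp Require Import all_boot all_order all_algebra.
From mathcomp Require Import reals.
Set Implicit Arguments. Unset Strict Implicit. Unset Printing Implicit Defensive.
Import Order.TTheory GRing.Theory Num.Theory.

Definition simple_graph (V : finType) (adj : rel V) :=
  symmetric adj /\ irreflexive adj.

Definition orientation (V : finType) (adj : rel V) (o : rel V) :=
  (forall u v, o u v -> adj u v) /\
  (forall u v, adj u v -> o u v (+) o v u).

Definition oedges (V : finType) (adj o : rel V) : {set V * V} :=
  [set e : V * V | adj e.1 e.2 && o e.1 e.2].

Definition tail (V : finType) (e : V * V) := e.1.
Definition head (V : finType) (e : V * V) := e.2.

Definition ntri (V : finType) (adj : rel V) (e : V * V) : nat :=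
  #|[set w | adj e.1 w && adj e.2 w]|.

Definition lr_rel (V : finType) (e e' : V * V) : bool :=
  (head e == tail e') || (head e' == tail e).

Definition pm_rel (V : finType) (e e' : V * V) : bool :=
  (head e == head e') || (tail e == tail e').

(* e and e' are two (distinct) edges of a common triangle of the graph *)
Definition tri_rel (V : finType) (adj : rel V) (e e' : V * V) : bool :=
  let S := [set e.1; e.2; e'.1; e'.2] in
  [&& e != e', #|S| == 3 & [forall x in S, forall y in S, (x != y) ==> adj x y]].

Definition hcoef (R : numDomainType) (V : finType) (adj : rel V)
    (e e' : V * V) : R :=
  (if e == e' then (ntri adj e + 2)%N%:R
  else if lr_rel e e' && ~~ tri_rel adj e e' then -1
  else if pm_rel e e' && ~~ tri_rel adj e e' then 1
  else 0)%R.

Definition helmholtzian (R : numDomainType) (V : finType) (adj o : rel V)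
    : 'M[R]_#|oedges adj o| :=
  \matrix_(i, j) hcoef R adj (enum_val i) (enum_val j).

Definition H_eigenvalues (R : numDomainType) (V : finType) (adj o : rel V)
    (lam : seq R) : Prop :=
  [/\ size lam = #|oedges adj o|,
      sorted (fun x y => y <= x) lam &
      char_poly (helmholtzian R adj o) = \prod_(x <- lam) ('X - x%:P)]%R.

Definition induced (V : finType) (adj : rel V) (S : {set V}) : rel V :=
  fun u v => [&& adj u v, u \in S & v \in S].

Definition kappa (V : finType) (adj : rel V) (S : {set V}) (e : V * V) : nat :=
  ntri adj e - ntri (induced adj S) e.

Definition kappa_max (V : finType) (adj : rel V) (S : {set V}) (o' : rel V) : nat :=
  \max_(e in oedges (induced adj S) o') kappa adj S e.

Definition kappa_min (V : finType) (adj : rel V) (S : {set V}) (o' : rel V) : nat :=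
  \big[minn/kappa_max adj S o']_(e in oedges (induced adj S) o') kappa adj S e.

(* Interlacing by compression.  Read each edge of G' as an edge of G, with a
   sign recording whether the orientations o' and o agree: the resulting signed
   selection matrix E has orthonormal rows, and E H(G) E^T = H(G') + diag(kappa).
   Off the diagonal, two edges of G' lie in a common triangle of G iff they do in
   G', since such a triangle only uses their endpoints; on the diagonal the
   triangle counts differ by kappa(e) by definition.  The Courant-Fischer
   min-max principle, derived from the spectral theorem for normal matrices over
   R[i], then bounds the eigenvalues as in Cauchy's interlacing theorem. *)

From Pilot Require Import Defs.
From HB Require Import structures.
From mathcomp Require Import all_boot all_order all_algebra.
From mathcomp Require Import reals.
From mathcomp Require Import zify complex.
Set Implicit Arguments. Unset Strict Implicit. Unset Printing Implicit Defensive.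
Import Order.TTheory GRing.Theory Num.Theory.
Local Open Scope ring_scope.
Local Open Scope sesquilinear_scope.

Section QuadraticForm.
Variable C : numClosedFieldType.

Definition qform n (M : 'M[C]_n) (x : 'rV[C]_n) : C := (x *m M *m x^t*) 0 0.
Definition sqnorm n (x : 'rV[C]_n) : C := (x *m x^t*) 0 0.

Lemma trmxC_mul m n p (A : 'M[C]_(m, n)) (B : 'M[C]_(n, p)) :
  (A *m B)^t* = B^t* *m A^t*.
Proof. by rewrite trmx_mul map_mxM. Qed.

Lemma qformD n (A B : 'M[C]_n) x : qform (A + B) x = qform A x + qform B x.
Proof. by rewrite /qform mulmxDr mulmxDl mxE. Qed.

Lemma qform_mulmx m n (A : 'M[C]_n) (F : 'M[C]_(m, n)) x :
  qform A (x *m F) = qform (F *m A *m F^t*) x.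
Proof. by rewrite /qform trmxC_mul !mulmxA. Qed.

Lemma sqnorm_unitary m n (F : 'M[C]_(m, n)) x :
  F \is unitarymx -> sqnorm (x *m F) = sqnorm x.
Proof. by move=> Fu; rewrite /sqnorm trmxC_mul mulmxA mulmxtVK. Qed.

Lemma qform_diag n (d : 'rV[C]_n) (x : 'rV[C]_n) :
  qform (diag_mx d) x = \sum_j d 0 j * (x 0 j * (x 0 j)^*).
Proof.
rewrite /qform mul_mx_diag mxE; apply: eq_bigr => j _.
by rewrite !mxE mulrCA mulrA.
Qed.

Lemma sqnormE n (x : 'rV[C]_n) : sqnorm x = \sum_j x 0 j * (x 0 j)^*.
Proof. by rewrite /sqnorm mxE; apply: eq_bigr => j _; rewrite !mxE. Qed.

Lemma sqnorm_gt0 n (x : 'rV[C]_n) : x != 0 -> 0 < sqnorm x.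
Proof.
move=> /rV0Pn[j xj]; rewrite sqnormE (bigD1 j) //= ltr_pwDl ?mul_conjC_gt0 //.
by apply: sumr_ge0 => i _; exact: mul_conjC_ge0.
Qed.

Lemma qform_diag_ge n (d : 'rV[C]_n) c (x : 'rV[C]_n) :
  (forall j, x 0 j != 0 -> c <= d 0 j) -> c * sqnorm x <= qform (diag_mx d) x.
Proof.
move=> dc; rewrite qform_diag sqnormE mulr_sumr -subr_ge0 -sumrB.
apply: sumr_ge0 => j _; rewrite -mulrBl.
have [->|/dc] := eqVneq (x 0 j) 0; first by rewrite mul0r mulr0.
by rewrite -subr_ge0 => /mulr_ge0; apply; exact: mul_conjC_ge0.
Qed.

Lemma qform_diag_le n (d : 'rV[C]_n) c (x : 'rV[C]_n) :
  (forall j, x 0 j != 0 -> d 0 j <= c) -> qform (diag_mx d) x <= c * sqnorm x.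
Proof.
move=> dc; rewrite qform_diag sqnormE mulr_sumr -subr_ge0 -sumrB.
apply: sumr_ge0 => j _; rewrite -mulrBl.
have [->|/dc] := eqVneq (x 0 j) 0; first by rewrite mul0r mulr0.
by rewrite -subr_ge0 => /mulr_ge0; apply; exact: mul_conjC_ge0.
Qed.

End QuadraticForm.

Lemma exists_nonzero_capmx (F : fieldType) n p q (U : 'M[F]_(p, n)) (W : 'M[F]_(q, n)) :
  (n < \rank U + \rank W)%N ->
  exists2 x : 'rV[F]_n, x != 0 & (x <= U)%MS && (x <= W)%MS.
Proof.
move=> rUW; have : (U :&: W)%MS != 0.
  rewrite -mxrank_eq0; apply: contraTneq rUW => cap0.
  by rewrite -mxrank_sum_cap cap0 addn0 -leqNgt rank_leq_col.
case/rowV0Pn => x /[swap] x0; rewrite sub_capmx => xUW; by exists x.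
Qed.

Lemma char_poly_similar (F : fieldType) n (P A : 'M[F]_n) : P \in unitmx ->
  char_poly (invmx P *m A *m P) = char_poly A.
Proof.
move=> Pu; rewrite /char_poly /char_poly_mx.
have PVP : map_mx (@polyC F) (invmx P) *m map_mx (@polyC F) P = 1%:M.
  by rewrite -map_mxM mulVmx // map_mx1.
have -> : 'X%:M - map_mx polyC (invmx P *m A *m P) =
    map_mx (@polyC F) (invmx P) *m ('X%:M - map_mx polyC A) *m map_mx (@polyC F) P.
  rewrite mulmxBr mulmxBl !map_mxM -[_ *m 'X%:M *m _]mulmxA -scalar_mxC.
  by rewrite mulmxA PVP mul1mx.
by rewrite !det_mulmx mulrAC -det_mulmx PVP det1 mul1r.
Qed.

Section SortedNonincreasing.
Variables (T : numDomainType) (s : seq T).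
Hypothesis s_sorted : sorted (fun x y => y <= x) s.

Lemma count_ge_nth_sorted k : (k < size s)%N ->
  (k < count (fun x => (s`_k <= x)%R) s)%N.
Proof.
elim: s s_sorted k => [//|x t IHt] /= xt [|k] kt; first by rewrite lexx.
have /allP x_ge := order_path_min (rev_trans le_trans) xt.
by rewrite x_ge ?(mem_nth 0 kt) //; exact: IHt (path_sorted xt) k kt.
Qed.

Lemma count_le_nth_sorted k : (k < size s)%N ->
  (size s - k <= count (fun x => (x <= s`_k)%R) s)%N.
Proof.
elim: s s_sorted k => [//|x t IHt] /= xt [|k] kt.
  have /allP x_ge := order_path_min (rev_trans le_trans) xt.
  have -> : count (fun y => y <= x) t = size t.
    by apply/eqP; rewrite -all_count; apply/allP.
  by rewrite lexx subn0.
by rewrite /= subSS (leq_trans (IHt (path_sorted xt) k kt)) ?leq_addl.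
Qed.

End SortedNonincreasing.

Section SpectralRayleigh.
Variables (C : numClosedFieldType) (n : nat) (M : 'M[C]_n).
Hypothesis M_normal : M \is normalmx.
Let P := spectralmx M.
Let d := spectral_diag M.

Lemma qform_spectral x : qform M x = qform (diag_mx d) (x *m P^t*).
Proof.
rewrite qform_mulmx trmxCK; move/orthomx_spectralP: M_normal => {1}->.
by rewrite invmx_unitary ?spectral_unitarymx.
Qed.

Lemma sqnorm_spectral x : sqnorm x = sqnorm (x *m P^t*).
Proof. by rewrite sqnorm_unitary // trmxC_unitary spectral_unitarymx. Qed.

(* The j-th entry of [x *m P^t*] is the j-th coordinate of [x] in the
   orthonormal eigenbasis formed by the rows of [P]; [U] is spanned by the
   eigenvectors indexed by [J]. *)
Lemma spectral_subspace (J : {set 'I_n}) :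
  exists U : 'M[C]_(#|J|, n), \rank U = #|J| /\
    forall x : 'rV_n, (x <= U)%MS -> forall j, j \notin J -> (x *m P^t*) 0 j = 0.
Proof.
pose S : 'M[C]_(#|J|, n) := rowsub enum_val 1%:M.
have S_unitary : S \is unitarymx.
  apply/unitarymxP/matrixP => i i'; rewrite /S !mxE (bigD1 (enum_val i)) //= big1.
    by rewrite !mxE eqxx mul1r addr0 (inj_eq enum_val_inj) eq_sym conjC_nat.
  by move=> j /negbTE ji; rewrite !mxE eq_sym ji mul0r.
exists (S *m P); split.
  by rewrite mxrank_unitary // mul_unitarymx ?spectral_unitarymx.
move=> _ /submxP[z ->] j jJ; rewrite -mulmxA mulmxtVK ?spectral_unitarymx //.
rewrite mxE big1 // => i _; rewrite !mxE.
have [ji|] := eqVneq (enum_val i) j; last by rewrite mulr0.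
by move: jJ; rewrite -ji enum_valP.
Qed.

Variable mu : seq C.
Hypotheses (M_char : char_poly M = \prod_(x <- mu) ('X - x%:P))
           (mu_sorted : sorted (fun x y => y <= x) mu).

Lemma perm_eq_spectral_diag : perm_eq [seq d 0 j | j <- enum 'I_n] mu.
Proof.
apply: prod_XsubC_eq; rewrite -M_char [in RHS](orthomx_spectralP M_normal).
rewrite char_poly_similar ?spectral_unit // char_poly_trig ?diag_mx_is_trig //.
by rewrite big_map big_enum; apply: eq_bigr => i _; rewrite mxE eqxx mulr1n.
Qed.

Lemma size_eigenvalues : size mu = n.
Proof. by rewrite -(perm_size perm_eq_spectral_diag) size_map size_enum_ord. Qed.

Lemma card_spectral_diag (p : pred C) : #|[set j | p (d 0 j)]| = count p mu.
Proof.
rewrite -(permP perm_eq_spectral_diag) count_map cardsE cardE enumT.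
by rewrite /enum_mem size_filter; apply: eq_count.
Qed.

Lemma exists_subspace_rayleigh_ge k : (k < n)%N ->
  exists p (U : 'M[C]_(p, n)), (k < \rank U)%N /\
    forall x, (x <= U)%MS -> mu`_k * sqnorm x <= qform M x.
Proof.
move=> kn; have [U [rU U0]] := spectral_subspace [set j | mu`_k <= d 0 j].
exists _, U; split.
  by rewrite rU (card_spectral_diag (>= mu`_k)) count_ge_nth_sorted ?size_eigenvalues.
move=> x xU; rewrite qform_spectral sqnorm_spectral; apply: qform_diag_ge => j.
by apply: contraNT => dj; apply/eqP/(U0 x xU); rewrite inE.
Qed.

Lemma exists_subspace_rayleigh_le k : (k < n)%N ->
  exists p (U : 'M[C]_(p, n)), (n - k <= \rank U)%N /\
    forall x, (x <= U)%MS -> qform M x <= mu`_k * sqnorm x.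
Proof.
move=> kn; have [U [rU U0]] := spectral_subspace [set j | d 0 j <= mu`_k].
exists _, U; split.
  rewrite rU (card_spectral_diag (<= mu`_k)) -{1}size_eigenvalues.
  by rewrite count_le_nth_sorted ?size_eigenvalues.
move=> x xU; rewrite qform_spectral sqnorm_spectral; apply: qform_diag_le => j.
by apply: contraNT => dj; apply/eqP/(U0 x xU); rewrite inE.
Qed.

Lemma eigenvalue_ge_of_subspace k p (U : 'M[C]_(p, n)) c : (k < n)%N ->
  (k < \rank U)%N -> (forall x, (x <= U)%MS -> c * sqnorm x <= qform M x) ->
  c <= mu`_k.
Proof.
move=> kn rU Uc; have [q [W [rW Wle]]] := exists_subspace_rayleigh_le kn.
have [|x x0 /andP[xU xW]] := @exists_nonzero_capmx _ _ _ _ U W; first by lia.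
by rewrite -(ler_pM2r (sqnorm_gt0 x0)) (le_trans (Uc x xU) (Wle x xW)).
Qed.

Lemma eigenvalue_le_of_subspace k p (U : 'M[C]_(p, n)) c : (k < n)%N ->
  (n - k <= \rank U)%N -> (forall x, (x <= U)%MS -> qform M x <= c * sqnorm x) ->
  mu`_k <= c.
Proof.
move=> kn rU Uc; have [q [W [rW Wge]]] := exists_subspace_rayleigh_ge kn.
have [|x x0 /andP[xU xW]] := @exists_nonzero_capmx _ _ _ _ U W; first by lia.
by rewrite -(ler_pM2r (sqnorm_gt0 x0)) (le_trans (Wge x xW) (Uc x xU)).
Qed.

End SpectralRayleigh.

Section Interlacing.
Variables (C : numClosedFieldType) (m m' : nat).
Variables (A : 'M[C]_m) (B : 'M[C]_m') (E : 'M[C]_(m', m)) (k : 'rV[C]_m').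
Variables (lam lam' : seq C).
Hypotheses (A_normal : A \is normalmx) (B_normal : B \is normalmx).
Hypotheses (A_char : char_poly A = \prod_(x <- lam) ('X - x%:P))
           (B_char : char_poly B = \prod_(x <- lam') ('X - x%:P)).
Hypotheses (lam_sorted : sorted (fun x y => y <= x) lam)
           (lam'_sorted : sorted (fun x y => y <= x) lam').
Hypotheses (E_unitary : E \is unitarymx) (EAE : E *m A *m E^t* = B + diag_mx k).

Lemma compression_dim_le : (m' <= m)%N.
Proof. by rewrite -(mxrank_unitary E_unitary) rank_leq_col. Qed.

Lemma mxrank_compression p (U : 'M[C]_(p, m')) : \rank (U *m E) = \rank U.
Proof. by rewrite mxrankMfree // /row_free mxrank_unitary. Qed.

Lemma qform_compression y : qform A (y *m E) = qform B y + qform (diag_mx k) y.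
Proof. by rewrite qform_mulmx EAE qformD. Qed.

Lemma interlacing_lower a i : (forall j, a <= k 0 j) -> (i < m')%N ->
  lam'`_i + a <= lam`_i.
Proof.
move=> ak im'.
have [p [U [rU Uge]]] := exists_subspace_rayleigh_ge B_normal B_char lam'_sorted im'.
apply: (eigenvalue_ge_of_subspace A_normal A_char lam_sorted (U := U *m E)).
- exact: leq_trans im' compression_dim_le.
- by rewrite mxrank_compression.
move=> _ /submxP[z ->]; rewrite mulmxA qform_compression sqnorm_unitary //.
by rewrite mulrDl lerD ?Uge ?submxMl ?qform_diag_ge.
Qed.

Lemma interlacing_upper b i : (forall j, k 0 j <= b) -> (i < m')%N ->
  lam`_(m - m' + i) <= lam'`_i + b.
Proof.
move=> kb im'; have m'm := compression_dim_le.
have [p [U [rU Ule]]] := exists_subspace_rayleigh_le B_normal B_char lam'_sorted im'.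
apply: (eigenvalue_le_of_subspace A_normal A_char lam_sorted (U := U *m E)).
- by lia.
- by rewrite mxrank_compression; lia.
move=> _ /submxP[z ->]; rewrite mulmxA qform_compression sqnorm_unitary //.
by rewrite mulrDl lerD ?Ule ?submxMl ?qform_diag_le.
Qed.

Lemma interlacing a b i : (forall j, a <= k 0 j <= b) -> (i < m')%N ->
  lam'`_i + a <= lam`_i /\ lam`_(m - m' + i) <= lam'`_i + b.
Proof.
move=> kab im'; split; [apply: interlacing_lower | apply: interlacing_upper] => // j;
  by case/andP: (kab j).
Qed.

End Interlacing.

Section RealSymmetric.
Variable R : realType.
Local Notation toC := (real_complex R).

Lemma trmxC_real m n (A : 'M[R]_(m, n)) : (map_mx toC A)^t* = map_mx toC A^T.
Proof. by apply/matrixP => i j; rewrite !mxE conj_Creal // complex_real. Qed.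

Lemma normalmx_real_sym n (A : 'M[R]_n) : A^T = A -> map_mx toC A \is normalmx.
Proof. by move=> symA; apply/normalmxP; rewrite trmxC_real symA. Qed.

Lemma char_poly_real_complex n (A : 'M[R]_n) lam :
  char_poly A = \prod_(x <- lam) ('X - x%:P) ->
  char_poly (map_mx toC A) = \prod_(x <- map toC lam) ('X - x%:P).
Proof.
move=> A_char; rewrite -map_char_poly A_char rmorph_prod big_map.
by apply: eq_bigr => x _; rewrite rmorphB /= map_polyX map_polyC.
Qed.

Lemma sorted_real_complex (lam : seq R) : sorted (fun x y => y <= x) lam ->
  sorted (fun x y => y <= x) (map toC lam).
Proof. by rewrite sorted_map; apply: sub_sorted => x y; rewrite /= lecR. Qed.

Lemma nth_real_complex (lam : seq R) i : (map toC lam)`_i = toC lam`_i.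
Proof.
have [lt_i_lam|le_lam_i] := ltnP i (size lam); first exact: nth_map.
by rewrite !nth_default ?size_map ?rmorph0.
Qed.

Theorem interlacing_real_sym m m' (A : 'M[R]_m) (B : 'M[R]_m')
    (E : 'M[R]_(m', m)) (k : 'rV[R]_m') (lam lam' : seq R) a b :
  A^T = A -> B^T = B ->
  char_poly A = \prod_(x <- lam) ('X - x%:P) ->
  char_poly B = \prod_(x <- lam') ('X - x%:P) ->
  sorted (fun x y => y <= x) lam -> sorted (fun x y => y <= x) lam' ->
  E *m E^T = 1%:M -> E *m A *m E^T = B + diag_mx k ->
  (forall j, a <= k 0 j <= b) ->
  forall i, (i < m')%N ->
    lam'`_i + a <= lam`_i /\ lam`_(m - m' + i) <= lam'`_i + b.
Proof.
move=> symA symB A_char B_char lam_sorted lam'_sorted EE EAE kab i im'.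
have E_unitary : map_mx toC E \is unitarymx.
  by apply/unitarymxP; rewrite trmxC_real -map_mxM EE map_mx1.
have EAE_C : map_mx toC E *m map_mx toC A *m (map_mx toC E)^t* =
    map_mx toC B + diag_mx (map_mx toC k).
  by rewrite trmxC_real -!map_mxM EAE map_mxD map_diag_mx.
have kab_C j : toC a <= map_mx toC k 0 j <= toC b by rewrite mxE !lecR.
have := interlacing (normalmx_real_sym symA) (normalmx_real_sym symB)
  (char_poly_real_complex A_char) (char_poly_real_complex B_char)
  (sorted_real_complex lam_sorted) (sorted_real_complex lam'_sorted)
  E_unitary EAE_C kab_C im'.
by rewrite !nth_real_complex -!rmorphD !lecR.
Qed.

End RealSymmetric.

Section EdgeRelations.
Context {V : finType}.
Implicit Types (adj o : rel V) (e f : V * V).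

Definition rev_edge e : V * V := (e.2, e.1).

Definition distinct_edges e f :=
  [&& e.1 != e.2, f.1 != f.2, e != f & rev_edge e != f].

Lemma rev_edgeK : involutive rev_edge. Proof. by case. Qed.

Lemma distinct_edgesC e f : distinct_edges e f = distinct_edges f e.
Proof.
rewrite /distinct_edges andbCA (eq_sym f).
by rewrite -(inj_eq (can_inj rev_edgeK) (rev_edge f)) rev_edgeK (eq_sym f).
Qed.

Lemma distinct_edges_revl e f :
  distinct_edges (rev_edge e) f = distinct_edges e f.
Proof.
by rewrite /distinct_edges rev_edgeK /= eq_sym (andbC (rev_edge e != f)).
Qed.

Lemma lr_rel_revl e f : lr_rel (rev_edge e) f = pm_rel e f.
Proof. by rewrite /lr_rel /pm_rel /Defs.head /Defs.tail /= orbC (eq_sym f.2). Qed.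

Lemma pm_rel_revl e f : pm_rel (rev_edge e) f = lr_rel e f.
Proof. by rewrite /lr_rel /pm_rel /Defs.head /Defs.tail /= orbC (eq_sym e.1). Qed.

Lemma lr_pm_rel_excl e f : e.1 != e.2 -> f.1 != f.2 ->
  ~~ (lr_rel e f && pm_rel e f).
Proof.
case: e f => u v [x y] /= uv xy; rewrite /lr_rel /pm_rel /Defs.head /Defs.tail /=.
by apply/negP => /andP[/orP[]/eqP ? /orP[]/eqP ?]; subst; rewrite eqxx in uv xy.
Qed.

Lemma tri_relC adj e f : tri_rel adj e f = tri_rel adj f e.
Proof.
rewrite /tri_rel eq_sym; have -> : [set f.1; f.2; e.1; e.2] = [set e.1; e.2; f.1; f.2].
  by apply/setP => x; rewrite !inE; do 4 case: (x == _).
by [].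
Qed.

Lemma tri_rel_revl adj e f : e != f -> rev_edge e != f ->
  tri_rel adj (rev_edge e) f = tri_rel adj e f.
Proof.
move=> ef ref; rewrite /tri_rel ef ref.
have -> : [set (rev_edge e).1; (rev_edge e).2; f.1; f.2] = [set e.1; e.2; f.1; f.2].
  by apply/setP => x; rewrite !inE /=; do 4 case: (x == _).
by [].
Qed.

Lemma hcoefC (R : numDomainType) adj e f : hcoef R adj e f = hcoef R adj f e.
Proof.
rewrite /hcoef eq_sym tri_relC /lr_rel /pm_rel /Defs.head /Defs.tail.
case: eqP => [->|_] //.
by rewrite (orbC (e.2 == f.1)) (eq_sym e.2 f.2) (eq_sym e.1 f.1).
Qed.

Lemma hcoef_revl (R : numDomainType) adj e f : distinct_edges e f ->
  hcoef R adj (rev_edge e) f = - hcoef R adj e f.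
Proof.
case/and4P=> ee ff ef ref; rewrite /hcoef (negbTE ef) (negbTE ref).
rewrite tri_rel_revl // lr_rel_revl pm_rel_revl.
case: (tri_rel adj e f); rewrite ?andbF ?oppr0 // !andbT.
have := lr_pm_rel_excl ee ff.
by case: (lr_rel e f); case: (pm_rel e f); rewrite //= ?opprK ?oppr0.
Qed.

End EdgeRelations.

Section Orientation.
Variables (R : numDomainType) (V : finType) (adj o : rel V).
Implicit Types (e f : V * V).

Definition orient e := if o e.1 e.2 then e else rev_edge e.
Definition orient_sign e : R := if o e.1 e.2 then 1 else -1.

Lemma orient_sign_sqr e : orient_sign e * orient_sign e = 1.
Proof. by rewrite /orient_sign; case: ifP; rewrite ?mulr1 ?mulrNN ?mulr1. Qed.

Lemma distinct_edges_orientl e f : distinct_edges (orient e) f = distinct_edges e f.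
Proof. by rewrite /orient; case: ifP; rewrite ?distinct_edges_revl. Qed.

Lemma orient_neq e f : distinct_edges e f -> orient e != orient f.
Proof.
case/and4P=> _ _ ef ref; rewrite /orient.
case: ifP; case: ifP => _ _; rewrite ?(inj_eq (can_inj rev_edgeK)) //.
by rewrite -(inj_eq (can_inj rev_edgeK)) rev_edgeK.
Qed.

Lemma hcoef_orientl e f : distinct_edges e f ->
  orient_sign e * hcoef R adj (orient e) f = hcoef R adj e f.
Proof.
rewrite /orient_sign /orient; case: ifP => _ ef.
  by rewrite mul1r.
by rewrite hcoef_revl // mulN1r opprK.
Qed.

Lemma hcoef_orient e f : distinct_edges e f ->
  orient_sign e * orient_sign f * hcoef R adj (orient e) (orient f) = hcoef R adj e f.
Proof.
move=> ef; rewrite (mulrC (orient_sign e)) -mulrA hcoef_orientl; last first.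
  by rewrite distinct_edgesC distinct_edges_orientl distinct_edgesC.
by rewrite hcoefC hcoef_orientl 1?hcoefC // distinct_edgesC.
Qed.

Lemma ntri_orient e : ntri adj (orient e) = ntri adj e.
Proof.
rewrite /orient; case: ifP => // _.
by apply: eq_card => w; rewrite !inE andbC.
Qed.

Lemma orient_in_oedges e : simple_graph adj -> orientation adj o ->
  adj e.1 e.2 -> orient e \in oedges adj o.
Proof.
move=> [adj_sym _] [_ o_xor] adj_e; rewrite /orient inE.
case: ifP => [-> | o_e]; first by rewrite adj_e.
by move: (o_xor _ _ adj_e); rewrite o_e /= => ->; rewrite adj_sym adj_e.
Qed.

Lemma distinct_oedges e f : simple_graph adj -> orientation adj o ->
  e \in oedges adj o -> f \in oedges adj o -> e != f -> distinct_edges e f.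
Proof.
move=> [_ adj_irr] [_ o_xor]; rewrite !inE => /andP[adj_e o_e] /andP[adj_f o_f] ef.
apply/and4P; split=> //.
- by apply: contraTneq adj_e => ->; rewrite adj_irr.
- by apply: contraTneq adj_f => ->; rewrite adj_irr.
by apply: contraTneq o_f => <-; move: (o_xor _ _ adj_e); rewrite o_e.
Qed.

End Orientation.

Section InducedSubgraph.
Variables (V : finType) (adj : rel V) (S : {set V}).

Lemma induced_simple : simple_graph adj -> simple_graph (induced adj S).
Proof.
move=> [adj_sym adj_irr]; split=> [u v|u]; rewrite /induced ?adj_irr //.
by rewrite adj_sym (andbC (u \in S)).
Qed.

Lemma in_oedges_induced o e : e \in oedges (induced adj S) o ->
  [/\ adj e.1 e.2, e.1 \in S & e.2 \in S].
Proof. by rewrite inE /induced => /andP[/and3P[]]. Qed.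

Lemma ntri_induced_le e : (ntri (induced adj S) e <= ntri adj e)%N.
Proof.
apply/subset_leq_card/subsetP => w; rewrite !inE /induced.
by case/andP => /and3P[-> _ _] /and3P[-> _ _].
Qed.

Lemma tri_rel_induced e f : [set e.1; e.2; f.1; f.2] \subset S ->
  tri_rel (induced adj S) e f = tri_rel adj e f.
Proof.
move=> /subsetP efS; rewrite /tri_rel; congr [&& _, _ & _].
apply: eq_forallb_in => x xS; apply: eq_forallb_in => y yS.
by rewrite /induced efS ?efS ?andbT.
Qed.

Lemma hcoef_induced (R : numDomainType) e f : e != f ->
  [set e.1; e.2; f.1; f.2] \subset S ->
  hcoef R (induced adj S) e f = hcoef R adj e f.
Proof. by move=> ef efS; rewrite /hcoef (negbTE ef) tri_rel_induced. Qed.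

End InducedSubgraph.

Lemma tr_helmholtzian (R : numDomainType) (V : finType) (adj o : rel V) :
  (helmholtzian R adj o)^T = helmholtzian R adj o.
Proof. by apply/matrixP => i j; rewrite !mxE hcoefC. Qed.

Section EdgeEmbedding.
Variables (R : numDomainType) (V : finType) (adj : rel V) (S : {set V}) (o o' : rel V).
Hypotheses (adj_simple : simple_graph adj) (o_orient : orientation adj o)
           (o'_orient : orientation (induced adj S) o').
Local Notation m := #|oedges adj o|.
Local Notation m' := #|oedges (induced adj S) o'|.

Definition edge_embedding : 'M[R]_(m', m) :=
  \matrix_(j, a) if enum_val a == orient o (enum_val j)
                 then orient_sign R o (enum_val j) else 0.

Lemma exists_embedding_index (j : 'I_m') :
  exists a : 'I_m, enum_val a = orient o (enum_val j).
Proof.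
have [adj_j _ _] := in_oedges_induced (enum_valP j).
have oj := orient_in_oedges adj_simple o_orient adj_j.
by exists (enum_rank_in oj (orient o (enum_val j))); rewrite enum_rankK_in.
Qed.

Lemma edge_embedding_mulmx p (N : 'M[R]_(m, p)) j a c :
  enum_val a = orient o (enum_val j) ->
  (edge_embedding *m N) j c = orient_sign R o (enum_val j) * N a c.
Proof.
move=> ja; rewrite mxE (bigD1 a) //= big1 ?addr0 => [|b ba].
  by rewrite mxE ja eqxx.
by rewrite mxE -ja (inj_eq enum_val_inj) (negbTE ba) mul0r.
Qed.

Lemma edge_embedding_conj (M : 'M[R]_m) j l a b :
  enum_val a = orient o (enum_val j) -> enum_val b = orient o (enum_val l) ->
  (edge_embedding *m M *m edge_embedding^T) j l =
    orient_sign R o (enum_val j) * orient_sign R o (enum_val l) * M a b.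
Proof.
move=> ja lb; rewrite -mulmxA (edge_embedding_mulmx _ _ ja).
rewrite -[M *m _]trmxK trmx_mul trmxK mxE (edge_embedding_mulmx _ _ lb) mxE.
by rewrite mulrA.
Qed.

Lemma distinct_embedded_edges (j l : 'I_m') : j != l ->
  distinct_edges (enum_val j) (enum_val l).
Proof.
move=> jl; apply: distinct_oedges (induced_simple S adj_simple) o'_orient _ _ _.
- exact: enum_valP.
- exact: enum_valP.
by rewrite (inj_eq enum_val_inj).
Qed.

Lemma edge_embedding_unitary : edge_embedding *m edge_embedding^T = 1%:M.
Proof.
apply/matrixP => j l; have [a ja] := exists_embedding_index j.
have [b lb] := exists_embedding_index l.
have := edge_embedding_conj 1%:M ja lb; rewrite mulmx1 => ->; rewrite !mxE.
have [jl|jl] := eqVneq j l.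
  by move: (lb); rewrite -jl -ja => /enum_val_inj->; rewrite eqxx orient_sign_sqr mulr1.
have ab : a != b.
  by rewrite -(inj_eq enum_val_inj) ja lb orient_neq ?distinct_embedded_edges.
by rewrite (negbTE ab) mulr0.
Qed.

Lemma edge_embedding_helmholtzian :
  edge_embedding *m helmholtzian R adj o *m edge_embedding^T =
  helmholtzian R (induced adj S) o' + diag_mx (\row_j (kappa adj S (enum_val j))%:R).
Proof.
apply/matrixP => j l; have [a ja] := exists_embedding_index j.
have [b lb] := exists_embedding_index l.
rewrite (edge_embedding_conj _ ja lb) !mxE ja lb.
have [<-|jl] := eqVneq j l.
  rewrite orient_sign_sqr mul1r /hcoef !eqxx mulr1n ntri_orient -natrD /kappa.
  by rewrite addnAC subnKC ?ntri_induced_le.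
have [_ j1S j2S] := in_oedges_induced (enum_valP j).
have [_ l1S l2S] := in_oedges_induced (enum_valP l).
rewrite hcoef_orient ?distinct_embedded_edges // mulr0n addr0 hcoef_induced //.
  by apply: contra jl => /eqP/enum_val_inj->.
by apply/subsetP => x; rewrite !inE -!orbA => /or4P[]/eqP->.
Qed.

End EdgeEmbedding.

Unset Implicit Arguments.

Theorem theorem4p2 (R : realType) (V : finType) (adj : rel V) (S : {set V})
    (o o' : rel V) (lam lam' : seq R) :
  simple_graph adj ->
  orientation adj o ->
  orientation (induced adj S) o' ->
  (1 <= #|oedges adj o|)%N ->
  (1 <= #|oedges (induced adj S) o'|)%N ->
  H_eigenvalues adj o lam ->
  H_eigenvalues (induced adj S) o' lam' ->
  forall i : nat, (i < #|oedges (induced adj S) o'|)%N ->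
    lam`_i >= lam'`_i + (kappa_min adj S o')%:R /\
    lam'`_i + (kappa_max adj S o')%:R
      >= lam`_(#|oedges adj o| - #|oedges (induced adj S) o'| + i).
Proof.
move=> adj_simple o_orient o'_orient _ _ [_ lam_sorted A_char] [_ lam'_sorted B_char].
apply: interlacing_real_sym (tr_helmholtzian _ _ _) (tr_helmholtzian _ _ _)
  A_char B_char lam_sorted lam'_sorted
  (edge_embedding_unitary _ adj_simple o_orient o'_orient)
  (edge_embedding_helmholtzian _ adj_simple o_orient o'_orient) _ => j.
rewrite mxE !ler_nat; apply/andP; split.
  rewrite /kappa_min -Order.NatOrder.minEnat.
  exact: (@bigmin_le_cond _ nat) (enum_valP j).
exact: leq_bigmax_cond (enum_valP j).
Qed.
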